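(* Fix $T>1$ and constants $A,B>0$. Let $\mathbb{P}_0$ be the law of the set of event times in $[0,T]$ of an inhomogeneous Poisson point process with rate function $\Lambda_0(t)=B$, and let $\mathbb{P}_1$ be the corresponding law for the rate function \[ \Lambda_1(t)=B+Ae^{-(t-1)}\mathbf 1(t\ge 1). \] If $A/\sqrt{B}\to 0$, then no estimator can correctly detect a jump at $t=1$ with probability greater than $1/2+o(1)$; that is, for every test $\psi$ (a measurable function of the observed event times with values in $\{0,1\}$, where $\psi=1$ declares a jump at $t=1$), one has $\tfrac12\big(\mathbb{P}_0(\psi=0)+\mathbb{P}_1(\psi=1)\big)\le \tfrac12+o(1)$.
   Context: An inhomogeneous Poisson point process with (deterministic) rate function $\Lambda\ge 0$ is a point process on $[0,\infty)$ whose number of points in disjoint intervals are independent and whose number of points in an interval $I$ is Poisson with mean $\int_I\Lambda(s)\,ds$. The asymptotics $o(1)$ are as the parameters vary with $A/\sqrt B\to 0$. *)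

From HB Require Import structures.
From mathcomp Require Import all_boot all_order all_algebra.
From mathcomp Require Import all_classical all_reals all_analysis.
Set Implicit Arguments. Unset Strict Implicit. Unset Printing Implicit Defensive.
Import Order.TTheory GRing.Theory Num.Theory.
Import numFieldNormedType.Exports.
Local Open Scope classical_set_scope.
Local Open Scope ring_scope.

(* Poisson pmf with mean m >= 0 (including the degenerate mean 0, where it is
   the Dirac mass at 0, since 0 ^+ 0 = 1).  We do not use the library's
   [poisson_pmf], which returns 1 for every k when the rate is 0. *)
Definition pois_pmf {R : realType} (m : R) (k : nat) : R :=
  m ^+ k / (k`!)%:R * expR (- m).

(* A point configuration on [0, oo) is encoded by its counting function:
   x t = number of event times in (-oo, t] (so x t = #points in [0,t] for
   t >= 0, and x t = 0 for t < 0). *)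
Definition cyl_sets {R : realType} : set (set (R -> nat)) :=
  [set A | exists (t : R) (k : nat), A = [set x | x t = k]].

Definition config (R : realType) := g_sigma_algebraType (@cyl_sets R).

(* [P] is the law of the set of event times in [0, T] of an inhomogeneous
   Poisson point process with rate [Lam]: no points before 0, and for
   consecutive disjoint intervals (t_0, t_1], ..., (t_{n-1}, t_n] the numbers
   of event times in [0,T] lying in them are independent Poisson variables with
   means int_{(t_i, t_{i+1}] cap [0,T]} Lam. *)
Definition PPP_law {R : realType} (T : R) (Lam : R -> R)
    (P : probability (config R) R) : Prop :=
  (forall t : R, t < 0 -> P [set x : config R | x t = 0%N] = 1%E) /\
  (forall (n : nat) (t : nat -> R) (k : nat -> nat),
     (forall i, (i < n)%N -> t i < t i.+1) ->
     P [set x : config R | forall i, (i < n)%N -> x (t i.+1) = (x (t i) + k i)%N]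
     = (\prod_(i < n)
          pois_pmf (Rintegral lebesgue_measure
                      (`]t i, t i.+1] `&` `[0, T]) Lam) (k i))%:E).

Definition rate0 {R : realType} (B : R) : R -> R := fun _ => B.
Definition rate1 {R : realType} (A B : R) : R -> R :=
  fun t => B + (if 1 <= t then A * expR (- (t - 1)) else 0).

From HB Require Import structures.
From mathcomp Require Import all_boot all_order all_algebra.
From mathcomp Require Import all_classical all_reals all_analysis.
From mathcomp Require Import ring lra.
Import Order.TTheory GRing.Theory Num.Theory.
Import numFieldNormedType.Exports.
Local Open Scope classical_set_scope.
Local Open Scope ring_scope.
Set Implicit Arguments. Unset Strict Implicit. Unset Printing Implicit Defensive.

(* Let S be the event {psi = 1}; the claim amounts to P1 S - P0 S <= 2 eps.
   Events determined by the counts at finitely many times approximate every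
   measurable S in P0 + P1, so it suffices to treat such a cylinder S.  On a
   grid t_0 < 0 < ... containing its times, S is a union of atoms prescribing
   the increments on the windows (t_i, t_(i+1)] cap [0, T], which have product
   Poisson probabilities with means a_i under P1 and b_i = B l_i under P0,
   l_i being the window length.  Termwise AM-GM gives
   P1 S - P0 S <= sum |p1 - p0| <= sqrt (sum p1^2 / p0 - 1), and
   sum p1^2 / p0 <= prod_i exp ((a_i - b_i)^2 / b_i) <= exp (A^2 T / B)
   because 0 <= a_i - b_i <= A l_i and sum_i l_i <= T.  Hence
   P1 S - P0 S <= sqrt (exp (A^2 T / B) - 1), which is small with A / sqrt B. *)

Section poisson_pmf.
Variable R : realType.
Implicit Types (a b m : R) (k K : nat).

Lemma pois_pmf_ge0 m k : 0 <= m -> 0 <= pois_pmf m k.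
Proof. by move=> m0; rewrite mulr_ge0 ?expR_ge0 // divr_ge0 // exprn_ge0. Qed.

Lemma pois_pmf0 k : pois_pmf (0 : R) k = (k == 0)%:R.
Proof.
by rewrite /pois_pmf oppr0 expR0 mulr1; case: k => [|k]; rewrite ?fact0 ?divr1 // expr0n mul0r.
Qed.

Lemma sum_pois_pmf m K :
  \sum_(k < K) pois_pmf m k = series (exp_coeff m) K * expR (- m).
Proof. by rewrite /series /= big_mkord big_distrl. Qed.

Lemma series_exp_coeff_le m K : 0 <= m -> series (exp_coeff m) K <= expR m.
Proof.
move=> m0; apply: nondecreasing_cvgn_le; last exact: is_cvg_series_exp_coeff.
apply/nondecreasing_seqP => n; rewrite /series /= big_nat_recr //= lerDl.
exact: exp_coeff_ge0.
Qed.

Lemma sum_pois_pmf_le1 m K : 0 <= m -> \sum_(k < K) pois_pmf m k <= 1.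
Proof.
move=> m0; rewrite sum_pois_pmf -(expRxMexpNx_1 m) ler_wpM2r ?expR_ge0 //.
exact: series_exp_coeff_le.
Qed.

Lemma sum_pois_pmf_cvg m : (fun K => \sum_(k < K) pois_pmf m k) @ \oo --> (1 : R).
Proof.
rewrite -(expRxMexpNx_1 m); under eq_fun do rewrite sum_pois_pmf.
by apply: cvgMr_tmp; exact: is_cvg_series_exp_coeff.
Qed.

(* The sum is a truncation of the series of [exp (a^2 / b) * exp (b - 2 a)]. *)
Lemma sum_pois_pmf_chi2_le a b K : 0 <= a -> 0 <= b -> (b = 0 -> a = 0) ->
  \sum_(k < K) pois_pmf a k ^+ 2 / pois_pmf b k <= expR ((a - b) ^+ 2 / b).
Proof.
move=> a0 b0 ba; have [b_eq0|b_neq0] := eqVneq b 0.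
  rewrite b_eq0 (ba b_eq0) subrr expr0n mul0r expR0.
  case: K => [|K]; first by rewrite big_ord0.
  rewrite big_ord_recl big1 ?addr0 => [|i _]; last by rewrite !pois_pmf0 expr0n mul0r.
  by rewrite pois_pmf0 expr1n invr1 mulr1.
rewrite (_ : (a - b) ^+ 2 / b = a ^+ 2 / b + (b - 2 * a)); last by field.
have -> : \sum_(k < K) pois_pmf a k ^+ 2 / pois_pmf b k =
          series (exp_coeff (a ^+ 2 / b)) K * expR (b - 2 * a).
  rewrite /series /= big_mkord big_distrl; apply: eq_bigr => k _.
  rewrite /pois_pmf /exp_coeff /= [(a ^+ 2 / b) ^+ k]exprMn exprVn -!exprM mulnC !exprM.
  rewrite expRD !expRN (_ : 2 * a = a + a) ?expRD; last by ring.
  have fk : (k`!%:R : R) != 0 by rewrite pnatr_eq0 -lt0n fact_gt0.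
  by field; rewrite fk expf_neq0 // !gt_eqF ?expR_gt0.
rewrite [leRHS]expRD ler_pM2r ?expR_gt0 // series_exp_coeff_le // divr_ge0 ?sqr_ge0 //.
Qed.

End poisson_pmf.

(* AM-GM applied to [2 |p - q| <= (p - q)^2 / (c q) + c q]. *)
Lemma dist_le_chi2_term (R : realFieldType) (p q c : R) :
  0 <= p -> 0 <= q -> (q = 0 -> p = 0) -> 0 < c ->
  `|p - q| <= (p ^+ 2 / q - 2 * p + q) / (2 * c) + c * q / 2.
Proof.
move=> p0 q0 qp c0; have [q_eq0|q_neq0] := eqVneq q 0.
  by rewrite (qp q_eq0) q_eq0 subrr normr0 expr0n /= !(mul0r, mulr0, addr0, oppr0).
have qpos : 0 < q by rewrite lt_def q_neq0.
rewrite (_ : p ^+ 2 / q - 2 * p + q = (p - q) ^+ 2 / q); last by field.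
have amgm : 2 * c * q * `|p - q| <= (p - q) ^+ 2 + (c * q) ^+ 2.
  by have := sqr_ge0 (`|p - q| - c * q); rewrite sqrrB real_normK ?num_real; nra.
rewrite -(@ler_pM2l _ (2 * c * q)) ?mulr_gt0 //; apply: (le_trans amgm).
by rewrite [leRHS](_ : _ = (p - q) ^+ 2 + (c * q) ^+ 2) //; field; rewrite !gt_eqF.
Qed.

Section poisson_product.
Variables (R : realType) (n : nat).
Implicit Types (a b m : 'I_n -> R) (K : nat).

Definition pois_prod_pmf m K (k : {ffun 'I_n -> 'I_K}) : R :=
  \prod_(i < n) pois_pmf (m i) (k i).

Lemma sum_pois_prod_pmf m K :
  \sum_(k : {ffun 'I_n -> 'I_K}) pois_prod_pmf m k =
  \prod_(i < n) \sum_(j < K) pois_pmf (m i) j.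
Proof. by rewrite bigA_distr_bigA. Qed.

Lemma sum_pois_prod_pmf_cvg m :
  (fun K => \sum_(k : {ffun 'I_n -> 'I_K}) pois_prod_pmf m k) @ \oo --> (1 : R).
Proof.
under eq_fun do rewrite sum_pois_prod_pmf.
suff : (fun K => \prod_(i < n) \sum_(j < K) pois_pmf (m i) j) @ \oo -->
       \prod_(i < n) (1 : R) by rewrite big1.
apply: (@cvg_big R _ *%R 1 xpredT (@mul_continuous R)) => i _.
exact: sum_pois_pmf_cvg.
Qed.

Variables (a b : 'I_n -> R) (c : R).
Hypotheses (a0 : forall i, 0 <= a i) (b0 : forall i, 0 <= b i)
  (ba : forall i, b i = 0 -> a i = 0) (c0 : 0 < c).

Let pmf_ge0 m K (k : {ffun 'I_n -> 'I_K}) :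
  (forall i, 0 <= m i) -> 0 <= pois_prod_pmf m k.
Proof. by move=> m0; apply: prodr_ge0 => i _; exact: pois_pmf_ge0. Qed.

Let pmf_b_eq0 K (k : {ffun 'I_n -> 'I_K}) :
  pois_prod_pmf b k = 0 -> pois_prod_pmf a k = 0.
Proof.
move/eqP/prodf_eq0 => [i _ /eqP bk0]; apply/eqP/prodf_eq0; exists i => //.
have [bi0|bi_neq0] := eqVneq (b i) 0; first by move: bk0; rewrite bi0 (ba bi0) => ->.
suff : pois_pmf (b i) (k i) != 0 by rewrite bk0 eqxx.
by rewrite /pois_pmf !mulf_neq0 ?expf_neq0 // gt_eqF ?expR_gt0.
Qed.

Lemma sum_pois_prod_pmf_le1 K : \sum_(k : {ffun 'I_n -> 'I_K}) pois_prod_pmf b k <= 1.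
Proof.
rewrite sum_pois_prod_pmf; apply: prodr_ile1 => i _.
by rewrite sum_pois_pmf_le1 // sumr_ge0 // => j _; exact: pois_pmf_ge0.
Qed.

Lemma sum_pois_prod_pmf_chi2_le K :
  \sum_(k : {ffun 'I_n -> 'I_K}) pois_prod_pmf a k ^+ 2 / pois_prod_pmf b k <=
  expR (\sum_(i < n) (a i - b i) ^+ 2 / b i).
Proof.
have -> : \sum_(k : {ffun 'I_n -> 'I_K}) pois_prod_pmf a k ^+ 2 / pois_prod_pmf b k =
          \prod_(i < n) \sum_(j < K) pois_pmf (a i) j ^+ 2 / pois_pmf (b i) j.
  rewrite bigA_distr_bigA; apply: eq_bigr => k _.
  by rewrite /pois_prod_pmf -prodrXl -prodfV -big_split.
rewrite expR_sum; apply: ler_prod => i _; apply/andP; split.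
  by apply: sumr_ge0 => j _; rewrite divr_ge0 ?exprn_ge0 ?pois_pmf_ge0.
exact: sum_pois_pmf_chi2_le K (a0 i) (b0 i) (@ba i).
Qed.

Lemma sum_pois_prod_pmf_dist_le K :
  \sum_(k : {ffun 'I_n -> 'I_K}) `|pois_prod_pmf a k - pois_prod_pmf b k| <=
  (expR (\sum_(i < n) (a i - b i) ^+ 2 / b i)
     - 2 * \sum_(k : {ffun 'I_n -> 'I_K}) pois_prod_pmf a k + 1) / (2 * c) + c / 2.
Proof.
apply: le_trans.
  apply: ler_sum => k _; apply: (dist_le_chi2_term _ _ _ c0); rewrite ?pmf_ge0 //.
  exact: pmf_b_eq0.
rewrite big_split /= -!big_distrl /= -big_distrr /= !big_split /= sumrN -big_distrr /=.
have := sum_pois_prod_pmf_le1 K; have := sum_pois_prod_pmf_chi2_le K.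
have c2 : 0 < (2 * c)^-1 by rewrite invr_gt0 mulr_gt0.
move=> chi2 mass; apply: lerD; first by rewrite ler_pM2r //; lra.
by rewrite ler_pM2r ?invr_gt0 // -[leRHS]mulr1 ler_pM2l.
Qed.

(* Truncating the counts at [K] loses the mass [1 - \sum_k pois_prod_pmf a k],
   which vanishes as [K] grows. *)
Lemma le_pois_prod_dist (x : R) :
  (forall K, x <= \sum_(k : {ffun 'I_n -> 'I_K}) `|pois_prod_pmf a k - pois_prod_pmf b k|
                  + (1 - \sum_(k : {ffun 'I_n -> 'I_K}) pois_prod_pmf a k)) ->
  x <= (expR (\sum_(i < n) (a i - b i) ^+ 2 / b i) - 1) / (2 * c) + c / 2.
Proof.
move=> xle; set E := expR _.
pose Q K := \sum_(k : {ffun 'I_n -> 'I_K}) pois_prod_pmf a k.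
pose g K := (E - 1) / (2 * c) + c / 2 + (1 + c^-1) * (1 - Q K).
have gE : g @ \oo --> (E - 1) / (2 * c) + c / 2.
  rewrite -[X in _ --> X]addr0 -(mulr0 (1 + c^-1)) -(subrr 1).
  apply: cvgD; first exact: cvg_cst.
  by apply: cvgMl_tmp; apply: cvgB; [exact: cvg_cst | exact: sum_pois_prod_pmf_cvg].
apply: (cvgr_to_ge gE); apply: nearW => K; apply: (le_trans (xle K)).
have := sum_pois_prod_pmf_dist_le K; rewrite /g -/E -/(Q K).
have -> : (E - 2 * Q K + 1) / (2 * c) = (E - 1) / (2 * c) + c^-1 * (1 - Q K).
  by field; rewrite gt_eqF.
lra.
Qed.

End poisson_product.

Lemma measurableY d (T : measurableType d) (A B : set T) :
  measurable A -> measurable B -> measurable (A `+` B).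
Proof. by move=> mA mB; rewrite setY_def; apply: measurableU; exact: measurableD. Qed.

Lemma measure_bigsetU_fin d (T : ringOfSetsType d) (R : realFieldType)
    (mu : {content set T -> \bar R}) (I : finType) (P : pred I) (F : I -> set T) :
  (forall i, measurable (F i)) -> trivIset setT F ->
  mu (\big[setU/set0]_(i in P) F i) = (\sum_(i in P) mu (F i))%E.
Proof.
move=> mF tF; rewrite [in LHS]big_enum_val [in RHS]big_enum_val.
by apply: measure_bigsetU_ord => // i j _ _ ij; apply/enum_val_inj/tF.
Qed.

Section fine_probability.
Context d (T : measurableType d) (R : realType) (P : probability T R).
Implicit Types A B : set T.

Lemma probability_fineK A : measurable A -> (fine (P A))%:E = P A.
Proof. by move=> mA; rewrite fineK // fin_num_measure. Qed.

Lemma le_fine_probability A B :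
  measurable A -> measurable B -> A `<=` B -> fine (P A) <= fine (P B).
Proof.
by move=> mA mB AB; rewrite -lee_fin !probability_fineK // le_measure ?inE.
Qed.

Lemma fine_probability_setU_le A B : measurable A -> measurable B ->
  fine (P (A `|` B)) <= fine (P A) + fine (P B).
Proof.
move=> mA mB; rewrite -lee_fin EFinD !probability_fineK ?measureU2 //.
exact: measurableU.
Qed.

Lemma fine_probability_setC A : measurable A -> fine (P (~` A)) = 1 - fine (P A).
Proof. by move=> mA; rewrite probability_setC // -probability_fineK. Qed.

Lemma fine_probability_bigsetU (I : finType) (Q : pred I) (F : I -> set T) :
  (forall i, measurable (F i)) -> trivIset setT F ->
  fine (P (\big[setU/set0]_(i in Q) F i)) = \sum_(i in Q) fine (P (F i)).
Proof.
move=> mF tF; apply: EFin_inj; rewrite -sumEFin probability_fineK; last first.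
  by apply: bigsetU_measurable => i _.
by rewrite measure_bigsetU_fin //; apply: eq_bigr => i _; rewrite probability_fineK.
Qed.

Lemma fine_probability_setI_full Z A : measurable Z -> measurable A ->
  P Z = 1%E -> fine (P (Z `&` A)) = fine (P A).
Proof.
move=> mZ mA PZ; apply/eqP; rewrite eq_le le_fine_probability ?subIsetr //=; last first.
  exact: measurableI.
have ZA : A `<=` (Z `&` A) `|` ~` Z by move=> x Ax; have [Zx|] := pselect (Z x); [left|right].
apply: (le_trans (le_fine_probability _ _ ZA)) => //.
  by apply: measurableU; [exact: measurableI | exact: measurableC].
rewrite (le_trans (fine_probability_setU_le _ _)) //; [exact: measurableI | exact: measurableC |].
by rewrite fine_probability_setC // PZ subrr addr0.
Qed.

Lemma le_fine_probability_setY A B : measurable A -> measurable B ->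
  fine (P A) <= fine (P B) + fine (P (A `+` B)).
Proof.
move=> mA mB; apply: le_trans (fine_probability_setU_le mB (measurableY mA mB)).
apply: le_fine_probability => //; first exact: measurableU _ _ mB (measurableY mA mB).
by move=> x Ax; have [|] := pselect (B x); [left | right; left].
Qed.

End fine_probability.

Section test_on_atoms.
Context d (T : measurableType d) (R : realType) (P0 P1 : probability T R).
Variables (I : finType) (E : I -> set T) (S : set T).
Hypotheses (mS : measurable S) (mE : forall i, measurable (E i))
  (tE : trivIset setT E) (SE : forall i x y, E i x -> E i y -> S x -> S y).

Let inside : pred I := fun i => `[< E i `<=` S >].

Let mU (Q : pred I) : measurable (\big[setU/set0]_(i in Q) E i).
Proof. by apply: bigsetU_measurable => i _. Qed.

Let in_bigsetU (Q : pred I) x :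
  (\big[setU/set0]_(i in Q) E i) x <-> exists2 i, i \in Q & E i x.
Proof.
rewrite -bigcup_seq_cond; split => [[i /andP[_ Qi] Eix]|[i Qi Eix]]; first by exists i.
by exists i => //; rewrite /= mem_index_enum.
Qed.

Let S_sub : S `<=` \big[setU/set0]_(i in inside) E i `|` ~` \big[setU/set0]_(i in predT) E i.
Proof.
move=> x Sx; have [/in_bigsetU[i _ Eix]|] := pselect ((\big[setU/set0]_(i in predT) E i) x).
  by left; apply/in_bigsetU; exists i => //; apply/asboolP => y Eiy; exact: SE Eix Eiy Sx.
by right.
Qed.

Let inside_sub : \big[setU/set0]_(i in inside) E i `<=` S.
Proof. by move=> x /in_bigsetU[i /asboolP]; apply. Qed.

Lemma fine_probability_diff_le_atoms :
  fine (P1 S) - fine (P0 S) <=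
  \sum_i `|fine (P1 (E i)) - fine (P0 (E i))| + (1 - \sum_i fine (P1 (E i))).
Proof.
have P1S : fine (P1 S) <= \sum_(i in inside) fine (P1 (E i)) + (1 - \sum_i fine (P1 (E i))).
  rewrite -!fine_probability_bigsetU // -fine_probability_setC //.
  apply: le_trans (fine_probability_setU_le _ _ _); [|exact: mU|apply: measurableC; exact: mU].
  apply: le_fine_probability S_sub => //.
  by apply: measurableU; [exact: mU | apply: measurableC; exact: mU].
have P0S : \sum_(i in inside) fine (P0 (E i)) <= fine (P0 S).
  by rewrite -fine_probability_bigsetU //; exact: le_fine_probability inside_sub.
have dist : \sum_(i in inside) (fine (P1 (E i)) - fine (P0 (E i))) <=
            \sum_i `|fine (P1 (E i)) - fine (P0 (E i))|.
  rewrite big_mkcond /=; apply: ler_sum => i _.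
  by case: ifP => _; [exact: ler_norm | exact: normr_ge0].
by move: dist; rewrite sumrB; lra.
Qed.

End test_on_atoms.

Section window_masses.
Variable R : realType.
Local Notation leb := (@lebesgue_measure R).
Implicit Types (T u v A B : R).

Definition window T u v : set R := `]u, v] `&` `[0, T].

Definition window_length T u v : R := fine (leb (window T u v)).

Lemma measurable_window T u v : measurable (window T u v).
Proof. exact: measurableI. Qed.

Lemma window_length_ge0 T u v : 0 <= window_length T u v.
Proof. exact: fine_ge0. Qed.

Lemma window_finite T u v : (leb (window T u v) < +oo)%E.
Proof.
apply: (@le_lt_trans _ _ (leb `[0, T])); last first.
  by rewrite lebesgue_measure_itv; case: ifP; rewrite ?ltry.
by apply: le_measure; rewrite ?inE //; [exact: measurable_window | exact: subIsetr].
Qed.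

Definition clamp T x := Num.min (Num.max x 0) T.

Lemma window_length_le T u v : 0 <= T -> u <= v ->
  window_length T u v <= clamp T v - clamp T u.
Proof.
move=> T0 uv.
have sub : window T u v `<=` `[clamp T u, clamp T v].
  move=> x [] /=; rewrite !in_itv /= => /andP[ux xv] /andP[x0 xT].
  by rewrite ge_min ge_max (ltW ux) x0 le_min le_max xv xT.
have cuv : clamp T u <= clamp T v by apply: le_min2 => //; apply: le_max2.
have lebI : (leb `[clamp T u, clamp T v] <= (clamp T v - clamp T u)%:E)%E.
  by rewrite lebesgue_measure_itv /=; case: ifP => _; rewrite ?lee_fin ?subr_ge0.
rewrite -lee_fin /window_length fineK ?ge0_fin_numE ?window_finite //.
apply: le_trans lebI; apply: le_measure; rewrite ?inE //; exact: measurable_window.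
Qed.

Lemma sum_window_length_le T (t : nat -> R) n : 0 <= T ->
  (forall i, (i < n)%N -> t i <= t i.+1) ->
  \sum_(i < n) window_length T (t i) (t i.+1) <= T.
Proof.
move=> T0 tle; pose f i := clamp T (t i).
apply: (@le_trans _ _ (\sum_(i < n) (f i.+1 - f i))).
  by apply: ler_sum => i _; exact/window_length_le/tle.
rewrite -(big_mkord xpredT (fun i => f i.+1 - f i)) telescope_sumr // /f /clamp.
by rewrite lerBlDr ler_wpDr ?ge_min ?lexx ?orbT // le_min T0 le_max lexx orbT.
Qed.

Definition window_mass T (Lam : R -> R) u v : R := Rintegral leb (window T u v) Lam.

Lemma window_mass_rate0 T B u v : window_mass T (rate0 B) u v = B * window_length T u v.
Proof. by rewrite /window_mass Rintegral_cst //; exact: measurable_window. Qed.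

Lemma measurable_rate1 A B : measurable_fun [set: R] (rate1 A B).
Proof.
apply: measurable_realfun.measurable_funD => //; apply: measurable_fun_ifT => //.
  exact: measurable_realfun.measurable_fun_ler.
apply: measurable_realfun.measurable_funM => //.
apply: measurableT_comp; first exact: measurable_realfun.measurable_expR.
apply: measurableT_comp; first exact: measurable_realfun.oppr_measurable.
exact: measurable_realfun.measurable_funB.
Qed.

Lemma rate1_bounds A B x : 0 <= A -> B <= rate1 A B x <= B + A.
Proof.
move=> A0; rewrite /rate1; case: ifP => x1; last by rewrite addr0 lexx lerDl.
rewrite lerDl lerD2l mulr_ge0 ?expR_ge0 //= -[leRHS]mulr1 ler_wpM2l //.
by rewrite expR_le1 oppr_le0 subr_ge0.
Qed.

Lemma window_mass_rate1_bounds T A B u v : 0 <= A -> 0 <= B ->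
  B * window_length T u v <= window_mass T (rate1 A B) u v <= (B + A) * window_length T u v.
Proof.
move=> A0 B0; have mW := measurable_window T u v.
have int (f : R -> R) M : measurable_fun [set: R] f -> (forall x, `|f x| <= M) ->
    leb.-integrable (window T u v) (EFin \o f).
  move=> mf fM; apply: measurable_bounded_integrable => //; first exact: window_finite.
    exact: measurable_funS mf.
  by exists M; split => [|N MN x _ /=]; [exact: num_real | exact: le_trans (fM x) (ltW MN)].
have int1 : leb.-integrable (window T u v) (EFin \o rate1 A B).
  apply: (int _ (B + A)); first exact: measurable_rate1.
  by move=> x; have /andP[Bx xBA] := rate1_bounds B x A0; rewrite ger0_norm // (le_trans B0).
have intc c : leb.-integrable (window T u v) (EFin \o fun=> c).
  by apply: (int _ `|c|) => [|x]; [exact: measurable_cst | exact: lexx].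
rewrite /window_length -!Rintegral_cst //; apply/andP; split.
  by apply: le_Rintegral => // x _; have /andP[] := rate1_bounds B x A0.
by apply: le_Rintegral => // x _; have /andP[] := rate1_bounds B x A0.
Qed.

Lemma window_mass_rate0_ge0 T B u v : 0 <= B -> 0 <= window_mass T (rate0 B) u v.
Proof. by move=> B0; rewrite window_mass_rate0 mulr_ge0 ?window_length_ge0. Qed.

Lemma window_mass_rate1_ge0 T A B u v : 0 <= A -> 0 <= B ->
  0 <= window_mass T (rate1 A B) u v.
Proof.
move=> A0 B0; have /andP[+ _] := window_mass_rate1_bounds T u v A0 B0.
by apply: le_trans; rewrite mulr_ge0 ?window_length_ge0.
Qed.

Lemma window_mass_rate0_eq0 T A B u v : 0 <= A -> 0 < B ->
  window_mass T (rate0 B) u v = 0 -> window_mass T (rate1 A B) u v = 0.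
Proof.
move=> A0 B0; rewrite window_mass_rate0 => /eqP; rewrite mulf_eq0 gt_eqF //= => /eqP l0.
have /andP[] := window_mass_rate1_bounds T u v A0 (ltW B0).
by rewrite l0 !mulr0 => lb ub; apply/eqP; rewrite eq_le lb ub.
Qed.

Lemma window_chi2_le T A B u v : 0 <= A -> 0 < B ->
  (window_mass T (rate1 A B) u v - window_mass T (rate0 B) u v) ^+ 2
    / window_mass T (rate0 B) u v <= A ^+ 2 * window_length T u v / B.
Proof.
move=> A0 B0; rewrite window_mass_rate0; set l := window_length T u v.
have [l0|l_neq0] := eqVneq l 0; first by rewrite l0 !(mulr0, mul0r, invr0).
have lpos : 0 < l by rewrite lt_def l_neq0 window_length_ge0.
have /andP[lb ub] := window_mass_rate1_bounds T u v A0 (ltW B0).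
rewrite ler_pdivrMr ?mulr_gt0 // (_ : A ^+ 2 * l / B * (B * l) = (A * l) ^+ 2).
  rewrite -/l in lb ub; have Al0 : 0 <= A * l by rewrite mulr_ge0 // ltW.
  by rewrite ler_sqr ?nnegrE ?subr_ge0 //; nra.
by field; rewrite gt_eqF.
Qed.

Lemma sum_window_chi2_le T A B (t : nat -> R) n :
  0 <= T -> 0 <= A -> 0 < B -> (forall i, (i < n)%N -> t i <= t i.+1) ->
  \sum_(i < n) (window_mass T (rate1 A B) (t i) (t i.+1)
                  - window_mass T (rate0 B) (t i) (t i.+1)) ^+ 2
                 / window_mass T (rate0 B) (t i) (t i.+1) <= A ^+ 2 * T / B.
Proof.
move=> T0 A0 B0 tle.
apply: (@le_trans _ _ (A ^+ 2 / B * \sum_(i < n) window_length T (t i) (t i.+1))).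
  rewrite big_distrr /=; apply: ler_sum => i _; rewrite [leRHS]mulrAC.
  exact: window_chi2_le.
by rewrite [leRHS]mulrAC ler_wpM2l ?sum_window_length_le // divr_ge0 ?sqr_ge0 ?ltW.
Qed.

End window_masses.

Section grid.
Variable R : realType.
Implicit Types (s : seq R) (t : R).

Definition grid_origin s : R := - 1 - \sum_(t <- s) `|t|.

Lemma grid_origin_lt s t : t \in s -> grid_origin s < t.
Proof.
move=> ts; rewrite /grid_origin (big_rem t ts) /=.
have : 0 <= \sum_(u <- rem t s) `|u| by rewrite sumr_ge0.
have : - `|t| <= t by rewrite lerNl ler_normr lexx orbT.
lra.
Qed.

Lemma grid_origin_lt0 s : grid_origin s < 0.
Proof.
have : 0 <= \sum_(u <- s) `|u| by rewrite sumr_ge0.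
by rewrite /grid_origin; lra.
Qed.

Definition grid s : seq R := grid_origin s :: sort <=%R (undup s).

Definition grid_point s i : R := nth 0 (grid s) i.

Lemma size_grid s : size (grid s) = (size (undup s)).+1.
Proof. by rewrite /= size_sort. Qed.

Lemma sorted_grid s : sorted <%R (grid s).
Proof.
rewrite /grid /= path_sortedE; last exact: lt_trans.
rewrite sort_lt_sorted undup_uniq andbT; apply/allP => t.
by rewrite mem_sort mem_undup; exact: grid_origin_lt.
Qed.

Lemma grid_point_lt s i j : (i < j)%N -> (j <= size (undup s))%N ->
  grid_point s i < grid_point s j.
Proof.
move=> ij js; apply: (sorted_ltn_nth lt_trans) => //; first exact: sorted_grid.
  by rewrite inE size_grid ltnS (leq_trans (ltnW ij)).
by rewrite inE size_grid ltnS.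
Qed.

Lemma grid_point0_lt0 s : grid_point s 0 < 0.
Proof. exact: grid_origin_lt0. Qed.

Lemma mem_grid_point s t : t \in s ->
  exists2 i, (i <= size (undup s))%N & grid_point s i = t.
Proof.
move=> ts; have tg : t \in grid s by rewrite in_cons mem_sort mem_undup ts orbT.
by exists (index t (grid s)); [rewrite -ltnS -size_grid index_mem | exact: nth_index].
Qed.

End grid.

Section configurations.
Variable R : realType.
Local Notation X := (config R).

Lemma measurable_count (t : R) (k : nat) : measurable [set x : X | x t = k].
Proof. by apply: sub_gen_smallest; exists t, k. Qed.

Lemma measurable_count_step (u v : R) (k : nat) :
  measurable [set x : X | x v = (x u + k)%N].
Proof.
rewrite (_ : [set x : X | _] = \bigcup_m ([set x : X | x u = m] `&` [set x | x v = (m + k)%N])).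
  by apply: bigcup_measurable => m _; apply: measurableI; exact: measurable_count.
by apply/seteqP; split => [x /= xuv|x [m _ [/= -> ->]]]; first by exists (x u).
Qed.

Definition count_steps (t : nat -> R) n (k : nat -> nat) : set X :=
  [set x | forall i, (i < n)%N -> x (t i.+1) = (x (t i) + k i)%N].

Lemma measurable_count_steps t n k : measurable (count_steps t n k).
Proof.
elim: n => [|n IH].
  by rewrite (_ : count_steps t 0 k = setT) //; apply/seteqP; split => // x _ i.
rewrite (_ : count_steps t n.+1 k =
             count_steps t n k `&` [set x | x (t n.+1) = (x (t n) + k n)%N]).
  by apply: measurableI => //; exact: measurable_count_step.
apply/seteqP; split => [x xk|x [xk xn] i].
  by split => [i ni|]; apply: xk; rewrite ltnS // ltnW.
by rewrite ltnS leq_eqVlt => /orP[/eqP->//|]; exact: xk.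
Qed.

Lemma count_steps_agree t n k (x y : X) : x (t 0) = y (t 0) ->
  count_steps t n k x -> count_steps t n k y -> forall i, (i <= n)%N -> x (t i) = y (t i).
Proof.
move=> xy0 xk yk; elim => [//|i IH] i_lt.
by rewrite xk // yk // IH // ltnW.
Qed.

Lemma count_steps_uniq t n k k' (x : X) : count_steps t n k x -> count_steps t n k' x ->
  forall i, (i < n)%N -> k i = k' i.
Proof. by move=> xk xk' i ni; apply/(@addnI (x (t i))); rewrite -xk -?xk'. Qed.

Lemma PPP_law_count_steps T Lam (P : probability X R) t n k : PPP_law T Lam P ->
  (forall i, (i < n)%N -> t i < t i.+1) ->
  fine (P (count_steps t n k)) = \prod_(i < n) pois_pmf (window_mass T Lam (t i) (t i.+1)) (k i).
Proof. by move=> [_ law] tlt; rewrite law. Qed.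

Definition determined_by (s : seq R) (S : set X) :=
  forall x y : X, {in s, x =1 y} -> S x -> S y.

Definition cylinders : set (set X) :=
  [set S | measurable S /\ exists s, determined_by s S].

Lemma cylindersT : cylinders setT.
Proof. by split => //; exists [::]. Qed.

Lemma cylindersC : setC_closed cylinders.
Proof.
move=> S [mS [s Ss]]; split; first exact: measurableC.
by exists s => x y xy nSx Sy; apply/nSx/(Ss y) => // t ts; rewrite xy.
Qed.

Lemma cylindersU : setU_closed cylinders.
Proof.
move=> S S' [mS [s Ss]] [mS' [s' Ss']]; split; first exact: measurableU.
exists (s ++ s') => x y xy [Sx|Sx]; [left; apply: (Ss x) | right; apply: (Ss' x)] => // t ts.
  by rewrite xy // mem_cat ts.
by rewrite xy // mem_cat ts orbT.
Qed.

Lemma measurable_cylinders : @measurable _ X = <<s cylinders >>.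
Proof.
apply/seteqP; split; last first.
  by apply: smallest_sub => //; [exact: sigma_algebra_measurable | move=> S []].
apply: smallest_sub; first exact: smallest_sigma_algebra.
move=> _ [t [k ->]]; apply: sub_sigma_algebra; split; first exact: measurable_count.
by exists [:: t] => x y xy /=; rewrite -xy ?mem_head.
Qed.

End configurations.

Definition ffun_steps n K (k : {ffun 'I_n -> 'I_K}) (i : nat) : nat :=
  if insub i is Some j then k j else 0.

Lemma ffun_stepsE n K (k : {ffun 'I_n -> 'I_K}) (i : 'I_n) : ffun_steps k i = k i.
Proof. by rewrite /ffun_steps valK. Qed.

Section grid_atoms.
Variables (R : realType) (s : seq R) (K : nat).
Local Notation X := (config R).
Local Notation n := (size (undup s)).
Local Notation t := (grid_point s).

(* As [t 0 < 0], the constraint [x (t 0) = 0] holds almost surely; it pins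
   down the counts at all grid points of an atom. *)
Definition grid_atom (k : {ffun 'I_n -> 'I_K}) : set X :=
  [set x : X | x (t 0) = 0%N] `&` count_steps t n (ffun_steps k).

Lemma measurable_grid_atom k : measurable (grid_atom k).
Proof. by apply: measurableI; [exact: measurable_count | exact: measurable_count_steps]. Qed.

Lemma trivIset_grid_atom : trivIset setT grid_atom.
Proof.
move=> k k' _ _ [x [[_ xk] [_ xk']]]; apply/ffunP => i; apply: val_inj.
by have := count_steps_uniq xk xk' (ltn_ord i); rewrite !ffun_stepsE.
Qed.

Lemma grid_atom_determined (S : set X) : determined_by s S ->
  forall k x y, grid_atom k x -> grid_atom k y -> S x -> S y.
Proof.
move=> Ss k x y [x0 xk] [y0 yk]; apply: Ss => u us.
have [i ni <-] := mem_grid_point us.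
by apply: count_steps_agree xk yk _ ni; rewrite x0 y0.
Qed.

Lemma PPP_law_grid_atom T Lam (P : probability X R) k : PPP_law T Lam P ->
  fine (P (grid_atom k)) =
  pois_prod_pmf (fun i : 'I_n => window_mass T Lam (t i) (t i.+1)) k.
Proof.
move=> law; rewrite fine_probability_setI_full ?law.1 ?grid_point0_lt0 //.
- rewrite (PPP_law_count_steps _ law) => [|i ni]; last exact: grid_point_lt.
  by apply: eq_bigr => i _; rewrite ffun_stepsE.
- exact: measurable_count.
- exact: measurable_count_steps.
Qed.

End grid_atoms.

Section cylinder_bound.
Variables (R : realType) (T A B : R).
Hypotheses (T0 : 0 < T) (A0 : 0 < A) (B0 : 0 < B).
Variables (P0 P1 : probability (config R) R).
Hypotheses (law0 : PPP_law T (rate0 B) P0) (law1 : PPP_law T (rate1 A B) P1).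

Lemma cylinder_diff_le S : cylinders S ->
  fine (P1 S) - fine (P0 S) <= Num.sqrt (expR (A ^+ 2 * T / B) - 1).
Proof.
move=> [mS [s Ss]]; set n := size (undup s); set t := grid_point s.
have t_le i : (i < n)%N -> t i <= t i.+1 by move=> ni; exact/ltW/grid_point_lt.
pose a (i : 'I_n) := window_mass T (rate1 A B) (t i) (t i.+1).
pose b (i : 'I_n) := window_mass T (rate0 B) (t i) (t i.+1).
have b0 i : 0 <= b i by exact/window_mass_rate0_ge0/ltW.
have a0 i : 0 <= a i by apply: window_mass_rate1_ge0; exact: ltW.
have ba i : b i = 0 -> a i = 0 by apply: window_mass_rate0_eq0; rewrite ?ltW.
set D := expR (A ^+ 2 * T / B) - 1.
have D0 : 0 < D by rewrite subr_gt0 -expR0 ltr_expR !mulr_gt0 ?invr_gt0 ?exprn_gt0.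
have chi2 : \sum_(i < n) (a i - b i) ^+ 2 / b i <= A ^+ 2 * T / B.
  exact: sum_window_chi2_le (ltW T0) (ltW A0) B0 t_le.
have sD : 0 < Num.sqrt D by rewrite sqrtr_gt0.
apply: le_trans (le_pois_prod_dist a0 b0 ba sD _) _ => [K|].
  apply: le_trans (fine_probability_diff_le_atoms P0 P1 mS (@measurable_grid_atom R s K)
    (@trivIset_grid_atom R s K) (grid_atom_determined Ss)) _.
  under eq_bigr do rewrite (PPP_law_grid_atom _ law0) (PPP_law_grid_atom _ law1).
  by under [X in 1 - X]eq_bigr do rewrite (PPP_law_grid_atom _ law1).
have sqrtDE : D / (2 * Num.sqrt D) + Num.sqrt D / 2 = Num.sqrt D.
  by rewrite -{1}(sqr_sqrtr (ltW D0)); field; rewrite gt_eqF.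
rewrite -[leRHS]sqrtDE lerD2r ler_pM2r ?invr_gt0 ?mulr_gt0 // lerD2r.
by rewrite ler_expR.
Qed.

End cylinder_bound.

Section approximation.
Context d (T : measurableType d) (R : realType).
Variables (G : set (set T)) (mu : {measure set T -> \bar R}).
Hypotheses (measurableG : @measurable _ T = <<s G >>) (GT : G setT)
  (GC : setC_closed G) (GU : setU_closed G) (mu_fin : (mu setT < +oo)%E).
Local Open Scope ereal_scope.

Let G_measurable A : G A -> measurable A.
Proof. by rewrite measurableG; exact: sub_gen_smallest. Qed.

Let GI : setI_closed G.
Proof. by move=> A B GA GB; rewrite -[A]setCK -[B]setCK -setCU; apply/GC/GU; exact: GC. Qed.

Let G_bigsetU N (g : nat -> set T) : (forall k, G (g k)) -> G (\big[setU/set0]_(k < N) g k).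
Proof.
move=> Gg; elim: N => [|N IH]; last by rewrite big_ord_recr /=; exact: GU.
by rewrite big_ord0 -setCT; exact: GC.
Qed.

Lemma measure_bigcup_tail (F : (set T)^nat) : (forall k, measurable (F k)) ->
  forall e : R, (0 < e)%R ->
  exists N, mu (\bigcup_k F k `\` \big[setU/set0]_(k < N) F k) <= e%:E.
Proof.
move=> mF e e0; pose V N := \bigcup_k F k `\` \big[setU/set0]_(k < N) F k.
have mV N : measurable (V N).
  by apply: measurableD; [exact: bigcup_measurable | exact: bigsetU_measurable].
have V_noninc : nonincreasing_seq V.
  apply/nonincreasing_seqP => N; apply/subsetPset; apply: setDS.
  by rewrite big_ord_recr /=; exact: subsetUl.
have V_cap : \bigcap_N V N = set0.
  apply/seteqP; split => // x VX; have [m _ Fmx] := (VX 0%N I).1.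
  by apply: (VX m.+1 I).2; rewrite -bigcup_mkord; exists m => /=.
have V0_fin : mu (V 0%N) < +oo by apply: le_lt_trans mu_fin; rewrite le_measure ?inE.
have := nonincreasing_cvg_mu V0_fin mV _ V_noninc; rewrite V_cap measure0 => /(_ measurable0).
have e0E : 0 < e%:E by rewrite lte_fin.
move=> /(_ _ (open_ereal_lt' e0E)) [N _ VN]; exists N.
by apply/ltW/(VN N); rewrite /= leqnn.
Qed.

Lemma setY_bigcup_sub (F g : (set T)^nat) N :
  \bigcup_k F k `+` \big[setU/set0]_(k < N) g k `<=`
  (\bigcup_k F k `\` \big[setU/set0]_(k < N) F k) `|` \big[setU/set0]_(k < N) (F k `+` g k).
Proof.
pose FgN k := @bigsetU_sup _ k N (fun k => F k `+` g k).
rewrite !setY_def -!bigcup_mkord => x [[[m _ Fmx] ngx]|[[k /= kN gkx] nFx]].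
- have [[k /= kN Fkx]|nFNx] := pselect ((\bigcup_(k < N) F k) x).
    right; apply: (FgN k kN); rewrite setY_def; left; split => // gkx.
    by apply: ngx; exists k.
  by left; split => //; exists m.
- right; apply: (FgN k kN); rewrite setY_def; right; split => // Fkx.
  by apply: nFx; exists k.
Qed.

Definition approximable (S : set T) :=
  forall e : R, (0 < e)%R -> exists2 S0, G S0 & mu (S `+` S0) <= e%:E.

Lemma approximable_bigcup (F : (set T)^nat) : (forall k, measurable (F k)) ->
  (forall k, approximable (F k)) -> approximable (\bigcup_k F k).
Proof.
move=> mF approxF e e0; have e20 : (0 < e / 2)%R by rewrite divr_gt0.
have [N tail] := measure_bigcup_tail mF e20.
have eN0 : (0 < e / 2 / N.+1%:R)%R by rewrite divr_gt0.
have /choice[g approxg] : forall k, exists S0, G S0 /\ mu (F k `+` S0) <= (e / 2 / N.+1%:R)%:E.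
  by move=> k; have [S0 GS0 FS0] := approxF k _ eN0; exists S0.
exists (\big[setU/set0]_(k < N) g k); first by apply: G_bigsetU => k; case: (approxg k).
have mY k : measurable (F k `+` g k) by apply/measurableY/G_measurable; case: (approxg k).
have mtail : measurable (\bigcup_k F k `\` \big[setU/set0]_(k < N) F k).
  by apply: measurableD; [exact: bigcup_measurable | exact: bigsetU_measurable].
have mUY : measurable (\big[setU/set0]_(k < N) (F k `+` g k)).
  by apply: bigsetU_measurable => k _.
have mYU : measurable (\bigcup_k F k `+` \big[setU/set0]_(k < N) g k).
  apply: measurableY; first exact: bigcup_measurable.
  by apply: bigsetU_measurable => k _; apply: G_measurable; case: (approxg k).
apply: le_trans (le_measure mu (mem_set mYU) (mem_set (measurableU _ _ mtail mUY))
                            (@setY_bigcup_sub F g N)) _.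
apply: le_trans (measureU2 _ mtail mUY) _.
rewrite [e in _ <= e%:E](splitr e) EFinD leeD //.
apply: le_trans (@content_subadditive _ _ _ mu _ (fun k => F k `+` g k) N
                   (fun k _ => mY k) mUY (@subset_refl _ _)) _.
apply: le_trans; first by apply: lee_sum => k _; exact: (approxg k).2.
rewrite sumEFin sumr_const card_ord lee_fin -[X in (X <= _)%R]mulr_natr.
set e2 := (e / 2)%R; rewrite -mulrA ler_piMr ?(ltW e20) //.
by rewrite mulrC ler_pdivrMr ?ltr0n // mul1r ler_nat.
Qed.

Lemma measurable_approximable S : measurable S -> approximable S.
Proof.
rewrite measurableG; apply: dynkin_induction => //.
- by move=> e e0; exists setT; rewrite // setYK measure0 lee_fin ltW.
- by move=> A GA e e0; exists A; rewrite // setYK measure0 lee_fin ltW.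
- move=> A _ approxA e /approxA[S0 GS0 AS0]; exists (~` S0); first exact: GC.
  by rewrite !setY_def !setDE !setCK setUC setIC [~` A `&` _]setIC.
- by move=> F mF _; exact: approximable_bigcup.
Qed.

End approximation.

Lemma PPP_test_advantage_le (R : realType) (T A B : R) (P0 P1 : probability (config R) R)
    (S : set (config R)) : 0 < T -> 0 < A -> 0 < B ->
  PPP_law T (rate0 B) P0 -> PPP_law T (rate1 A B) P1 -> measurable S ->
  fine (P1 S) - fine (P0 S) <= Num.sqrt (expR (A ^+ 2 * T / B) - 1).
Proof.
move=> T0 A0 B0 law0 law1 mS; apply/ler_addgt0Pr => e e0.
pose mu := measure_add P0 P1.
have mu_fin : (mu setT < +oo)%E.
  rewrite /mu measure_addE; apply: lte_add_pinfty;
    by apply: le_lt_trans (probability_le1 _ measurableT) _; exact: ltry.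
have [S0 cS0 SS0] := measurable_approximable (@measurable_cylinders R)
  (@cylindersT R) (@cylindersC R) (@cylindersU R) mu_fin mS e0.
have mS0 : measurable S0 by case: cS0.
have mSS0 : measurable (S `+` S0) by exact: measurableY.
have : fine (P0 (S `+` S0)) + fine (P1 (S `+` S0)) <= e.
  by rewrite -lee_fin EFinD !probability_fineK // -measure_addE.
have := cylinder_diff_le T0 A0 B0 law0 law1 cS0.
have := le_fine_probability_setY P1 mS mS0.
have := le_fine_probability_setY P0 mS0 mS; rewrite setYC.
lra.
Qed.

Lemma sqrt_expR_sub1_le (R : realType) (T A B eps : R) :
  0 < T -> 0 < A -> 0 < B -> 0 < eps ->
  A / Num.sqrt B < Num.sqrt (ln (1 + (2 * eps) ^+ 2) / T) ->
  Num.sqrt (expR (A ^+ 2 * T / B) - 1) <= 2 * eps.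
Proof.
move=> T0 A0 B0 eps0 small.
have eps2 : 0 < 1 + (2 * eps) ^+ 2 by rewrite addr_gt0 ?exprn_gt0 ?mulr_gt0.
have L0 : 0 < ln (1 + (2 * eps) ^+ 2) by rewrite ln_gt0 // ltrDl exprn_gt0 ?mulr_gt0.
have AB : A / Num.sqrt B = Num.sqrt (A ^+ 2 / B).
  by rewrite sqrtrM ?sqr_ge0 // sqrtr_sqr ger0_norm ?ltW // sqrtrV ?ltW.
rewrite AB ltr_sqrt ?divr_gt0 // ltr_pdivlMr // mulrAC -ltr_expR lnK ?posrE // in small.
have eps_ge0 := ltW eps0.
rewrite -[2 * eps]ger0_norm ?mulr_ge0 // -sqrtr_sqr ler_sqrt ?sqr_ge0 //.
by rewrite lerBlDl; apply: ltW.
Qed.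

Theorem proposition2p1 (R : realType) (T : R) (hT : 1 < T) :
  forall eps : R, 0 < eps ->
  exists delta : R, 0 < delta /\
    forall A B : R, 0 < A -> 0 < B -> A / Num.sqrt B < delta ->
    forall P0 P1 : probability (config R) R,
      PPP_law T (rate0 B) P0 -> PPP_law T (rate1 A B) P1 ->
    forall psi : config R -> bool,
      measurable (psi @^-1` [set true]) ->
      ((2^-1)%:E * (P0 (psi @^-1` [set false]) + P1 (psi @^-1` [set true]))
        <= (2^-1 + eps)%:E)%E.
Proof.
move=> eps eps0; have T0 : 0 < T by exact: lt_trans hT.
exists (Num.sqrt (ln (1 + (2 * eps) ^+ 2) / T)); split.
  by rewrite sqrtr_gt0 divr_gt0 // ln_gt0 // ltrDl exprn_gt0 ?mulr_gt0.
move=> A B A0 B0 small P0 P1 law0 law1 psi mS; set S := psi @^-1` [set true].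
have -> : psi @^-1` [set false] = ~` S.
  by apply/seteqP; split => x; rewrite /S /preimage /=; case: (psi x).
have := PPP_test_advantage_le T0 A0 B0 law0 law1 mS.
have := sqrt_expR_sub1_le T0 A0 B0 eps0 small.
rewrite -(probability_fineK P0 (measurableC mS)) -(probability_fineK P1 mS).
by rewrite fine_probability_setC // -EFinD -EFinM lee_fin; lra.
Qed.
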